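(* If $\Phi=(\varphi_n)_{n\in\mathbb{N}}$ is a depth-bounded fuzzy bisimulation between fuzzy automata $\mathcal{A}$ and $\mathcal{A}'$, then for every $n\in\mathbb{N}$ and every $\alpha\in\mathcal{F}^n_{\leftrightarrow}$: $\varphi_n^{-1}\circ\alpha^{\mathcal{A}}\le\alpha^{\mathcal{A}'}$ and $\varphi_n\circ\alpha^{\mathcal{A}'}\le\alpha^{\mathcal{A}}$. Consequently $\varphi_n(x,x')\le\bigwedge_{\alpha\in\mathcal{F}^n_{\leftrightarrow}}(\alpha^{\mathcal{A}}(x)\Leftrightarrow\alpha^{\mathcal{A}'}(x'))$ for all $(x,x')\in A\times A'$.
   Context: $\mathcal{L}=\langle L,\le,\otimes,\Rightarrow,0,1\rangle$ is a complete residuated lattice: $\langle L,\le,0,1\rangle$ is a complete lattice with least element $0$ and greatest element $1$, $\langle L,\otimes,1\rangle$ is a commutative monoid, and $x\otimes y\le z$ iff $x\le (y\Rightarrow z)$; $x\Leftrightarrow y=(x\Rightarrow y)\wedge(y\Rightarrow x)$. Fuzzy relations are maps into $L$ ordered pointwise; $\varphi^{-1}(b,a)=\varphi(a,b)$; $(\varphi\circ\psi)(a,c)=\bigvee_b\varphi(a,b)\otimes\psi(b,c)$, $(\varphi\circ g)(a)=\bigvee_b\varphi(a,b)\otimes g(b)$. A fuzzy automaton over $\Sigma$ is $\mathcal{A}=\langle A,\delta^{\mathcal{A}},\sigma^{\mathcal{A}},\tau^{\mathcal{A}}\rangle$ with $A$ nonempty, $\delta^{\mathcal{A}}:A\times\Sigma\times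 A\to L$, $\sigma^{\mathcal{A}},\tau^{\mathcal{A}}:A\to L$; $\delta^{\mathcal{A}}_s(x,y)=\delta^{\mathcal{A}}(x,s,y)$; similarly $\mathcal{A}'$ with states $A'$. The sets $\mathcal{F}^n_{\leftrightarrow}$ are the smallest sets of formulas with: $\tau\in\mathcal{F}^n_{\leftrightarrow}$; $s\in\Sigma,\alpha\in\mathcal{F}^n_{\leftrightarrow}\Rightarrow(s\circ\alpha)\in\mathcal{F}^{n+1}_{\leftrightarrow}$; $a\in L,\alpha\in\mathcal{F}^n_{\leftrightarrow}\Rightarrow(a\leftrightarrow\alpha)\in\mathcal{F}^n_{\leftrightarrow}$; $\alpha,\beta\in\mathcal{F}^n_{\leftrightarrow}\Rightarrow(\alpha\wedge\beta)\in\mathcal{F}^n_{\leftrightarrow}$. Semantics: $\tau^{\mathcal{A}}$ is the terminal fuzzy set; $(s\circ\alpha)^{\mathcal{A}}=\delta^{\mathcal{A}}_s\circ\alpha^{\mathcal{A}}$; $(a\leftrightarrow\alpha)^{\mathcal{A}}(x)=a\Leftrightarrow\alpha^{\mathcal{A}}(x)$; $(\alpha\wedge\beta)^{\mathcal{A}}(x)=\alpha^{\mathcal{A}}(x)\wedge\beta^{\mathcal{A}}(x)$. A depth-bounded fuzzy bisimulation between $\mathcal{A}$ and $\mathcal{A}'$ is a sequence $(\varphi_n)_{n\in\mathbb{N}}$ of fuzzy relations $A\times A'\to L$ with $\varphi_n\le\varphi_{n-1}$ ($n\ge1$), $\varphi_0^{-1}\circ\tau^{\mathcal{A}}\le\tau^{\mathcal{A}'}$,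 $\varphi_0\circ\tau^{\mathcal{A}'}\le\tau^{\mathcal{A}}$, and for all $s\in\Sigma,n\ge1$: $\varphi_n^{-1}\circ\delta^{\mathcal{A}}_s\le\delta^{\mathcal{A}'}_s\circ\varphi_{n-1}^{-1}$ and $\varphi_n\circ\delta^{\mathcal{A}'}_s\le\delta^{\mathcal{A}}_s\circ\varphi_{n-1}$. *)

Set Implicit Arguments.
Unset Strict Implicit.

(** Complete residuated lattice  <L, <=, (x), =>, 0, 1>.
    Completeness: every subset S (a predicate) has a supremum [sup S];
    infima are derived.  1 is both the top element and the monoid unit. *)
Record CRL := {
  car :> Type;
  le : car -> car -> Prop;
  le_refl : forall x, le x x;
  le_antisym : forall x y, le x y -> le y x -> x = y;
  le_trans : forall x y z, le x y -> le y z -> le x z;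
  sup : (car -> Prop) -> car;
  sup_ub : forall (S : car -> Prop) x, S x -> le x (sup S);
  sup_least : forall (S : car -> Prop) y, (forall x, S x -> le x y) -> le (sup S) y;
  one : car;
  one_top : forall x, le x one;
  mul : car -> car -> car;
  mulA : forall x y z, mul x (mul y z) = mul (mul x y) z;
  mulC : forall x y, mul x y = mul y x;
  mul1x : forall x, mul one x = x;
  res : car -> car -> car;
  adjunction : forall x y z, le (mul x y) z <-> le x (res y z)
}.

Definition inf {L : CRL} (S : L -> Prop) : L := @sup L (fun y => forall x, S x -> @le L y x).
Definition zero (L : CRL) : L := @sup L (fun _ => False).
Definition meet {L : CRL} (x y : L) : L := inf (fun z => z = x \/ z = y).
Definition biimp {L : CRL} (x y : L) : L := meet (@res L x y) (@res L y x).

Definition rel_comp {L : CRL} {X Y Z : Type} (phi : X -> Y -> L) (psi : Y -> Z -> L) : X -> Z -> L :=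
  fun x z => @sup L (fun v => exists y, v = @mul L (phi x y) (psi y z)).
Definition set_comp {L : CRL} {X Y : Type} (phi : X -> Y -> L) (g : Y -> L) : X -> L :=
  fun x => @sup L (fun v => exists y, v = @mul L (phi x y) (g y)).
Definition rel_inv {L : CRL} {X Y : Type} (phi : X -> Y -> L) : Y -> X -> L := fun y x => phi x y.
Definition rel_le {L : CRL} {X Y : Type} (phi psi : X -> Y -> L) : Prop :=
  forall x y, @le L (phi x y) (psi x y).
Definition set_le {L : CRL} {X : Type} (f g : X -> L) : Prop := forall x, @le L (f x) (g x).

Record fuzzy_automaton (L : CRL) (Sigma : Type) := {
  st :> Type;
  st_nonempty : inhabited st;
  delta : st -> Sigma -> st -> L;
  sigma_in : st -> L;
  tau_out : st -> L
}.

Definition delta_s (L : CRL) (Sigma : Type) (A : fuzzy_automaton L Sigma) (s : Sigma)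
  : A -> A -> L := fun x y => @delta L Sigma A x s y.

(** The formula sets F^n_<->, as an inductive family indexed by the depth n *)
Inductive formula (L : CRL) (Sigma : Type) : nat -> Type :=
| Ftau : forall n, formula L Sigma n
| Fdia : forall n, Sigma -> formula L Sigma n -> formula L Sigma (S n)
| Fbiimp : forall n, car L -> formula L Sigma n -> formula L Sigma n
| Fand : forall n, formula L Sigma n -> formula L Sigma n -> formula L Sigma n.

Fixpoint eval (L : CRL) (Sigma : Type) (A : fuzzy_automaton L Sigma) (n : nat)
  (f : formula L Sigma n) : A -> L :=
  match f with
  | @Ftau _ _ _ => @tau_out L Sigma A
  | @Fdia _ _ _ s g => set_comp (@delta_s L Sigma A s) (@eval L Sigma A _ g)
  | @Fbiimp _ _ _ a g => fun x => biimp a (@eval L Sigma A _ g x)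
  | @Fand _ _ _ g h => fun x => meet (@eval L Sigma A _ g x) (@eval L Sigma A _ h x)
  end.

Definition depth_bounded_bisim (L : CRL) (Sigma : Type)
  (A A' : fuzzy_automaton L Sigma) (phi : nat -> A -> A' -> L) : Prop :=
  (forall n, rel_le (phi (S n)) (phi n)) /\
  set_le (set_comp (rel_inv (phi 0)) (@tau_out L Sigma A)) (@tau_out L Sigma A') /\
  set_le (set_comp (phi 0) (@tau_out L Sigma A')) (@tau_out L Sigma A) /\
  (forall (s : Sigma) (n : nat),
     rel_le (rel_comp (rel_inv (phi (S n))) (@delta_s L Sigma A s))
            (rel_comp (@delta_s L Sigma A' s) (rel_inv (phi n))) /\
     rel_le (rel_comp (phi (S n)) (@delta_s L Sigma A' s))
            (rel_comp (@delta_s L Sigma A s) (phi n))).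


(** Say that a degree r "transfers" a to b when [r (x) a <= b] and
    [r (x) b <= a]; by residuation this says exactly [r <= (a <=> b)]
    (lemma [le_biimp]).  The heart of the proof is the invariant

        phi_n(x,x') <= alpha^A(x) <=> alpha^A'(x')     for alpha in F^n,

    proved by induction on the formula alpha:
    - [tau]: phi_n <= phi_0 and the two terminal conditions on phi_0;
    - [s o alpha]: the forth/back transition conditions on phi_(n+1),
      combined with the induction hypothesis for phi_n (lemma [diamond_forth]);
    - [a <-> alpha] and [alpha /\ beta]: transfer is stable under these
      connectives in any complete residuated lattice. *)

Section ResiduatedLattice.
Context {L : CRL}.

Lemma mul_mono_l (x y z : L) : le x y -> le (mul x z) (mul y z).
Proof.
  intro Hxy. apply adjunction. eapply le_trans; [exact Hxy |].
  apply adjunction. apply le_refl.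
Qed.

Lemma mul_mono_r (x y z : L) : le x y -> le (mul z x) (mul z y).
Proof. intro Hxy. rewrite (mulC z x), (mulC z y). now apply mul_mono_l. Qed.

Lemma mul_sup_le (a b : L) (S : L -> Prop) :
  (forall s, S s -> le (mul a s) b) -> le (mul a (sup S)) b.
Proof.
  intro HS. rewrite mulC. apply adjunction. apply sup_least.
  intros s Hs. apply adjunction. rewrite mulC. auto.
Qed.

Lemma inf_lb (S : L -> Prop) (x : L) : S x -> le (inf S) x.
Proof. intro Hx. apply sup_least. auto. Qed.

Lemma inf_glb (S : L -> Prop) (y : L) : (forall x, S x -> le y x) -> le y (inf S).
Proof. intro Hy. exact (@sup_ub L (fun z : L => forall x, S x -> le z x) y Hy). Qed.

Lemma meet_lb1 (x y : L) : le (meet x y) x.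
Proof. apply inf_lb. auto. Qed.

Lemma meet_lb2 (x y : L) : le (meet x y) y.
Proof. apply inf_lb. auto. Qed.

Lemma meet_glb (x y z : L) : le z x -> le z y -> le z (meet x y).
Proof. intros Hx Hy. apply inf_glb. intros w [-> | ->]; assumption. Qed.

Lemma le_biimp (r a b : L) :
  le r (biimp a b) <-> le (mul r a) b /\ le (mul r b) a.
Proof.
  unfold biimp. split.
  - intro Hr. split; apply adjunction; eapply le_trans; try exact Hr.
    + apply meet_lb1.
    + apply meet_lb2.
  - intros [Hab Hba]. apply meet_glb; apply adjunction; assumption.
Qed.

Lemma biimp_mp (a b : L) : le (mul (biimp a b) a) b /\ le (mul (biimp a b) b) a.
Proof. apply le_biimp. apply le_refl. Qed.

Lemma biimp_transfer (r a b c : L) :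
  le (mul r a) b -> le (mul r b) a -> le (mul r (biimp c a)) (biimp c b).
Proof.
  intros Hab Hba. destruct (biimp_mp c a) as [Hca Hac].
  apply le_biimp. split.
  - rewrite <- mulA. eapply le_trans; [| exact Hab]. now apply mul_mono_r.
  - rewrite (mulC r), <- mulA.
    eapply le_trans; [| exact Hac]. now apply mul_mono_r.
Qed.

Lemma meet_transfer (r a b a' b' : L) :
  le (mul r a) b -> le (mul r a') b' -> le (mul r (meet a a')) (meet b b').
Proof.
  intros Hab Hab'. apply meet_glb.
  - eapply le_trans; [| exact Hab]. apply mul_mono_r, meet_lb1.
  - eapply le_trans; [| exact Hab']. apply mul_mono_r, meet_lb2.
Qed.

Lemma le_biimp_biimp (r a b c : L) :
  le r (biimp a b) -> le r (biimp (biimp c a) (biimp c b)).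
Proof.
  intro Hr. apply le_biimp in Hr as [Hab Hba].
  apply le_biimp. split; now apply biimp_transfer.
Qed.

Lemma le_biimp_meet (r a b a' b' : L) :
  le r (biimp a b) -> le r (biimp a' b') -> le r (biimp (meet a a') (meet b b')).
Proof.
  intros Hr Hr'. apply le_biimp in Hr as [Hab Hba]. apply le_biimp in Hr' as [Hab' Hba'].
  apply le_biimp. split; now apply meet_transfer.
Qed.

End ResiduatedLattice.

Section FuzzyRelations.
Context {L : CRL} {X X' : Type}.

Lemma set_comp_inv_le (R : X -> X' -> L) (f : X -> L) (g : X' -> L) :
  set_le (set_comp (rel_inv R) f) g <-> forall x x', le (mul (R x x') (f x)) (g x').
Proof.
  split.
  - intros Hle x x'. eapply le_trans; [| apply (Hle x')].
    apply (@sup_ub L (fun v => exists y, v = mul (R y x') (f y))). now exists x.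
  - intros Hpt x'. apply sup_least. intros v [x ->]. apply Hpt.
Qed.

Lemma diamond_forth (psi chi : X -> X' -> L) (d : X -> X -> L) (d' : X' -> X' -> L)
    (f : X -> L) (g : X' -> L) :
  rel_le (rel_comp (rel_inv psi) d) (rel_comp d' (rel_inv chi)) ->
  (forall y y', le (mul (chi y y') (f y)) (g y')) ->
  forall x x', le (mul (psi x x') (set_comp d f x)) (set_comp d' g x').
Proof.
  intros Hstep Hfg x x'. apply mul_sup_le. intros v [y ->].
  rewrite mulA. eapply le_trans.
  { apply mul_mono_l. eapply le_trans; [| apply (Hstep x' y)].
    apply (@sup_ub L (fun v => exists z, v = mul (psi z x') (d z y))). now exists x. }
  rewrite mulC. apply mul_sup_le. intros w [y' ->].
  rewrite (mulC (d' x' y')), mulA, (mulC (f y)).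
  eapply le_trans; [apply mul_mono_l, (Hfg y y') |].
  rewrite mulC. apply (@sup_ub L (fun v => exists z, v = mul (d' x' z) (g z))). now exists y'.
Qed.

End FuzzyRelations.

Section Bisimulation.
Context {L : CRL} {Sigma : Type} {A A' : fuzzy_automaton L Sigma}.
Context {phi : nat -> A -> A' -> L}.
Hypothesis Hbisim : depth_bounded_bisim phi.

Lemma bisim_le_phi0 (n : nat) (x : A) (x' : A') : le (phi n x x') (phi 0 x x').
Proof.
  destruct Hbisim as [Hdecr _]. induction n as [| n IH].
  - apply le_refl.
  - eapply le_trans; [apply Hdecr | exact IH].
Qed.

Lemma bisim_le_biimp (n : nat) (alpha : formula L Sigma n) (x : A) (x' : A') :
  le (phi n x x') (biimp (@eval L Sigma A n alpha x) (@eval L Sigma A' n alpha x')).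
Proof.
  destruct Hbisim as [_ [Htau1 [Htau2 Hdelta]]].
  revert x x'. induction alpha as [n | n s alpha IH | n a alpha IH | n alpha IHa beta IHb];
    intros x x'; simpl.
  - apply le_biimp. split.
    + eapply le_trans; [apply mul_mono_l, bisim_le_phi0 |].
      exact (proj1 (set_comp_inv_le (phi 0) _ _) Htau1 x x').
    + eapply le_trans; [apply mul_mono_l, bisim_le_phi0 |].
      exact (proj1 (set_comp_inv_le (rel_inv (phi 0)) _ _) Htau2 x' x).
  - destruct (Hdelta s n) as [Hforth Hback].
    assert (Htr : forall y y', le (mul (phi n y y') (@eval L Sigma A n alpha y)) (@eval L Sigma A' n alpha y')
                            /\ le (mul (phi n y y') (@eval L Sigma A' n alpha y')) (@eval L Sigma A n alpha y)).
    { intros y y'. apply le_biimp, IH. }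
    apply le_biimp. split.
    + apply (diamond_forth (phi (S n)) (phi n)); [exact Hforth |].
      intros y y'. apply Htr.
    + apply (diamond_forth (rel_inv (phi (S n))) (rel_inv (phi n)) _ _ _ _ Hback).
      intros y' y. apply Htr.
  - apply le_biimp_biimp, IH.
  - apply le_biimp_meet; [apply IHa | apply IHb].
Qed.

End Bisimulation.

Theorem mainTheorem16 (L : CRL) (Sigma : Type) (A A' : fuzzy_automaton L Sigma)
  (phi : nat -> A -> A' -> L) :
  @depth_bounded_bisim L Sigma A A' phi ->
  forall n : nat,
    (forall alpha : formula L Sigma n,
       set_le (set_comp (rel_inv (phi n)) (@eval L Sigma A n alpha)) (@eval L Sigma A' n alpha) /\
       set_le (set_comp (phi n) (@eval L Sigma A' n alpha)) (@eval L Sigma A n alpha)) /\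
    (forall (x : A) (x' : A'),
       @le L (phi n x x')
         (inf (fun v => exists alpha : formula L Sigma n,
                 v = biimp (@eval L Sigma A n alpha x) (@eval L Sigma A' n alpha x')))).
Proof.
  intros Hbisim n. split.
  - intro alpha.
    assert (Htr : forall x x', le (mul (phi n x x') (@eval L Sigma A n alpha x)) (@eval L Sigma A' n alpha x')
                            /\ le (mul (phi n x x') (@eval L Sigma A' n alpha x')) (@eval L Sigma A n alpha x)).
    { intros x x'. apply le_biimp, (bisim_le_biimp Hbisim). }
    split.
    + apply set_comp_inv_le. intros x x'. apply Htr.
    + apply (set_comp_inv_le (rel_inv (phi n))). intros x' x. apply Htr.
  - intros x x'. apply inf_glb. intros v [alpha ->]. apply (bisim_le_biimp Hbisim).
Qed.
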